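(* Let $n,r\in\mathbb N$ with $r<\frac n2$. Then $\tau(\mathfrak Q^{(n,r)})=\frac rn$, $$\tau(\mathfrak P^{(n)}_i\mathfrak Q^{(n,r)})=\frac{r\,(2r-1+(-1)^n)}{4n^2}\quad (i=3,4),\qquad \tau(\mathfrak P^{(n)}_i\mathfrak Q^{(n,r)})=\frac{r\,(4n-2r-1-(-1)^n)}{4n^2}\quad (i=1,2).$$
   Context: $\tau=\frac1n\operatorname{tr}$ is the normalized trace on $M_n(\mathbb C)$. For an invertible Hermitian matrix $X$, $\operatorname{sgn}(X)$ is the unique Hermitian unitary commuting with $X$ with $\operatorname{sgn}(X)X$ positive definite. For $n\in\mathbb N$, $\mathfrak P^{(n)}_1,\dots,\mathfrak P^{(n)}_4\in M_n(\mathbb R)$ denote orthogonal projections (real symmetric idempotent matrices) such that (i) $\mathfrak P^{(n)}_1+\dots+\mathfrak P^{(n)}_4=(2-\frac1n)I_n$; (ii) $\operatorname{rk}\mathfrak P^{(n)}_1=\lfloor\frac n2\rfloor-(-1)^n$ and $\operatorname{rk}\mathfrak P^{(n)}_i=\lfloor\frac n2\rfloor$ for $i=2,3,4$; (iii) the only subspaces of $\mathbb C^n$ invariant under all four matrices are $0$ and $\mathbb C^n$. Such quadruples exist for every $n$, and any two of them are simultaneously unitarily equivalent. For $0\le r\le n$, $\mathfrak Q^{(n,r)}:=\frac12\big(I+\operatorname{sgn}((2r-\frac12)I-n(\mathfrak P^{(n)}_3+\mathfrak P^{(n)}_4))\big)$ (the argument of $\operatorname{sgn}$ is invertible); equivalently,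 $\mathfrak Q^{(n,r)}$ is the orthogonal projection onto the span of eigenvectors of $\mathfrak P^{(n)}_3+\mathfrak P^{(n)}_4$ for its $r$ smallest eigenvalues. *)

From HB Require Import structures.
From mathcomp Require Import all_boot all_order all_algebra.
Set Implicit Arguments. Unset Strict Implicit. Unset Printing Implicit Defensive.
Import Order.TTheory GRing.Theory Num.Theory.
Local Open Scope ring_scope.

Definition cadj (C : numClosedFieldType) (m n : nat) (M : 'M[C]_(m, n)) : 'M[C]_(n, m) :=
  (map_mx Num.conj M)^T.

Definition hermitian (C : numClosedFieldType) (n : nat) (M : 'M[C]_n) : Prop :=
  cadj M = M.

Definition posdef (C : numClosedFieldType) (n : nat) (M : 'M[C]_n) : Prop :=
  hermitian M /\ forall v : 'cV[C]_n, v != 0 -> 0 < (cadj v *m M *m v) 0 0.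

Definition is_sgn (C : numClosedFieldType) (n : nat) (X U : 'M[C]_n) : Prop :=
  [/\ hermitian U, U *m cadj U = 1%:M, U *m X = X *m U & posdef (U *m X)].

Definition real_orth_proj (C : numClosedFieldType) (n : nat) (P : 'M[C]_n) : Prop :=
  [/\ forall i j, P i j \is Num.real, P^T = P & P *m P = P].

Definition ntr (C : numClosedFieldType) (n : nat) (M : 'M[C]_n) : C :=
  \tr M / n%:R.

From Pilot Require Import Defs.
From HB Require Import structures.
From mathcomp Require Import all_boot all_order all_algebra.
From mathcomp Require Import ring zify.
Import Order.TTheory GRing.Theory Num.Theory.
Set Implicit Arguments. Unset Strict Implicit. Unset Printing Implicit Defensive.
Local Open Scope ring_scope.

(* For idempotents P and Q the matrix P - Q anticommutes with P + Q - 1, so an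
   eigenvalue s of P + Q other than 0 and 2 comes with 2 - s.  Writing the
   eigenvalues of P3 + P4 as t / n, this reflection applied to (P3, P4), and to
   (P1, P2) through P1 + P2 = 2 - 1/n - (P3 + P4), gives t |-> 2n - t and
   t |-> 2n - 2 - t; with 0 <= t <= 2n - 1 (both sums are positive
   semidefinite) the spectrum is forced to be {(2j + p)/n | j < n}, n simple
   eigenvalues, where the parity p is fixed by tr (P3 + P4) = rank P3 + rank P4.
   In an eigenbasis of P3 + P4 the sign S is diagonal with entries
   sg (2r - 1/2 - (2j + p)), so Q projects onto the first r basis vectors, and
   there the diagonal entries of P3, P4 (resp. P1, P2) are half those of
   P3 + P4 (resp. P1 + P2), again by anticommutation. *)

Section IdempotentPair.
Variables (F : fieldType) (n : nat) (P Q : 'M[F]_n).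
Hypotheses (P_idem : P *m P = P) (Q_idem : Q *m Q = Q).

Lemma idem_sub_anticomm :
  (P + Q) *m (P - Q) + (P - Q) *m (P + Q) = 2 *: (P - Q).
Proof.
rewrite !(mulmxDl, mulmxDr, mulmxBl, mulmxBr, mulmxN, mulNmx) P_idem Q_idem.
by move: (P *m Q) (Q *m P) => PQ QP; apply/matrixP => i j; rewrite !mxE; ring.
Qed.

Lemma idem_sub_sqr : (P - Q) *m (P - Q) = 2 *: (P + Q) - (P + Q) *m (P + Q).
Proof.
rewrite !(mulmxDl, mulmxDr, mulmxBl, mulmxBr, mulmxN, mulNmx) P_idem Q_idem.
by move: (P *m Q) (Q *m P) => PQ QP; apply/matrixP => i j; rewrite !mxE; ring.
Qed.

(* [v (P - Q)] is an eigenvector for [2 - s]; it is nonzero because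
   [(P - Q)^2 = (P + Q) (2 - (P + Q))] acts on [v] as the scalar [s (2 - s)]. *)
Lemma eigenvalue_idem_add_reflect s :
  eigenvalue (P + Q) s -> s != 0 -> s != 2 -> eigenvalue (P + Q) (2 - s).
Proof.
move=> /eigenvalueP[v vA v_neq0] s_neq0 s_neq2.
apply/eigenvalueP; exists (v *m (P - Q)).
  have := congr1 (mulmx v) idem_sub_anticomm.
  rewrite mulmxDr mulmxA vA -!scalemxAl -!scalemxAr -mulmxA => anticomm.
  by rewrite scalerBl -anticomm addrAC subrr add0r.
have vB2 : v *m (P - Q) *m (P - Q) = (s * (2 - s)) *: v.
  rewrite -mulmxA idem_sub_sqr mulmxBr -scalemxAr !mulmxA vA -scalemxAl vA.
  by rewrite !scalerA -scalerBl; congr (_ *: _); ring.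
apply: contraNneq v_neq0 => vB0; move: vB2; rewrite vB0 mul0mx => /esym/eqP.
by rewrite scaler_eq0 mulf_eq0 subr_eq0 (negPf s_neq0) eq_sym (negPf s_neq2).
Qed.

Lemma eigenvalue_idem_add_reflect_div c t : c != 0 ->
  eigenvalue (P + Q) (t / c) -> t != 0 -> t != 2 * c ->
  eigenvalue (P + Q) ((2 * c - t) / c).
Proof.
move=> c_neq0 ev t_neq0 t_neq2c; rewrite mulrBl mulfK //.
apply: eigenvalue_idem_add_reflect => //; first by rewrite mulf_neq0 ?invr_eq0.
by rewrite -[2](mulfK c_neq0) (inj_eq (mulIf _)) ?invr_eq0.
Qed.

End IdempotentPair.

Lemma eigenvalue_scalar_sub (F : fieldType) n (M : 'M[F]_n) c s :
  eigenvalue M s -> eigenvalue (c%:M - M) (c - s).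
Proof.
move=> /eigenvalueP[v vM v_neq0]; apply/eigenvalueP; exists v => //.
by rewrite mulmxBr mul_mx_scalar vM scalerBl.
Qed.

Section Adjoint.
Variable C : numClosedFieldType.

Lemma cadjM m n p (A : 'M[C]_(m, n)) (B : 'M[C]_(n, p)) :
  cadj (A *m B) = cadj B *m cadj A.
Proof. by rewrite /cadj map_mxM trmx_mul. Qed.

Lemma cadjK m n (A : 'M[C]_(m, n)) : cadj (cadj A) = A.
Proof. by apply/matrixP => i j; rewrite !mxE conjCK. Qed.

Lemma cadj_eq0 m n (A : 'M[C]_(m, n)) : (cadj A == 0) = (A == 0).
Proof.
apply/eqP/eqP => [A0|->]; last by apply/matrixP => i j; rewrite !mxE conjC0.
by rewrite -[A]cadjK A0; apply/matrixP => i j; rewrite !mxE conjC0.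
Qed.

Lemma mulmx_cadj_ge0 n (v : 'rV[C]_n) : 0 <= (v *m cadj v) 0 0.
Proof. by rewrite /cadj map_trmx -dotmxE dnorm_ge0. Qed.

Lemma mulmx_cadj_gt0 n (v : 'rV[C]_n) : v != 0 -> 0 < (v *m cadj v) 0 0.
Proof. by rewrite /cadj map_trmx -dotmxE dnorm_gt0. Qed.

Lemma real_orth_proj_hermitian n (P : 'M[C]_n) :
  real_orth_proj P -> Defs.hermitian P.
Proof.
case=> P_real P_sym _; apply/matrixP => i j.
by rewrite !mxE conj_Creal // -[in RHS]P_sym mxE.
Qed.

Lemma hermitian_idem_form_ge0 n (P : 'M[C]_n) (v : 'rV[C]_n) :
  Defs.hermitian P -> P *m P = P -> 0 <= (v *m P *m cadj v) 0 0.
Proof.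
move=> P_herm P_idem.
have -> : v *m P *m cadj v = (v *m P) *m cadj (v *m P).
  by rewrite cadjM P_herm -[in LHS]P_idem !mulmxA.
exact: mulmx_cadj_ge0.
Qed.

Lemma eigenvalue_hermitian_idem_add_ge0 n (P Q : 'M[C]_n) s :
  Defs.hermitian P -> Defs.hermitian Q -> P *m P = P -> Q *m Q = Q ->
  eigenvalue (P + Q) s -> 0 <= s.
Proof.
move=> P_herm Q_herm P_idem Q_idem /eigenvalueP[v vA v_neq0].
have := congr1 (fun M => \tr (M *m cadj v)) vA.
rewrite /= mulmxDr mulmxDl -scalemxAl mxtraceD mxtraceZ !trace_mx11 => vAv.
rewrite -(pmulr_lge0 _ (mulmx_cadj_gt0 v_neq0)) -vAv.
by rewrite addr_ge0 // hermitian_idem_form_ge0.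
Qed.

Lemma posdef_eigenvalue_gt0 n (M : 'M[C]_n) a : posdef M -> eigenvalue M a -> 0 < a.
Proof.
move=> [_ M_pos] /eigenvalueP[v vM v_neq0].
have := M_pos (cadj v); rewrite cadj_eq0 cadjK => /(_ v_neq0).
by rewrite vM -scalemxAl mxE pmulr_lgt0 // mulmx_cadj_gt0.
Qed.

End Adjoint.

Section QuadrupleSpectrum.
Variables (C : numClosedFieldType) (n : nat) (P1 P2 P3 P4 : 'M[C]_n).
Hypotheses (P1_herm : Defs.hermitian P1) (P2_herm : Defs.hermitian P2).
Hypotheses (P3_herm : Defs.hermitian P3) (P4_herm : Defs.hermitian P4).
Hypotheses (P1_idem : P1 *m P1 = P1) (P2_idem : P2 *m P2 = P2).
Hypotheses (P3_idem : P3 *m P3 = P3) (P4_idem : P4 *m P4 = P4).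
Hypothesis n_gt0 : (0 < n)%N.
Hypothesis sum_P : P1 + P2 + P3 + P4 = (2 - n%:R^-1)%:M.

Local Notation spec t := (eigenvalue (P3 + P4) (t / n%:R)).

Let n_neq0 : n%:R != 0 :> C. Proof. by rewrite pnatr_eq0 -lt0n. Qed.

Let sum_P12 : P1 + P2 = (2 - n%:R^-1)%:M - (P3 + P4).
Proof. by apply/esym/eqP; rewrite subr_eq -sum_P !addrA. Qed.

Let sum_P34 : P3 + P4 = (2 - n%:R^-1)%:M - (P1 + P2).
Proof. by rewrite sum_P12 subKr. Qed.

Let eigenvalue_complement (A B : 'M[C]_n) t : A = (2 - n%:R^-1)%:M - B ->
  eigenvalue B (t / n%:R) -> eigenvalue A ((2 * n%:R - 1 - t) / n%:R).
Proof.
move=> -> ev; rewrite [X in eigenvalue _ X](_ : _ = 2 - n%:R^-1 - t / n%:R).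
  exact: eigenvalue_scalar_sub.
by field.
Qed.

Lemma spec_ge0 t : spec t -> 0 <= t.
Proof.
move/(eigenvalue_hermitian_idem_add_ge0 P3_herm P4_herm P3_idem P4_idem).
by rewrite pmulr_lge0 // invr_gt0 ltr0n.
Qed.

Lemma spec_le t : spec t -> t + 1 <= 2 * n%:R.
Proof.
move/(eigenvalue_complement sum_P12).
move/(eigenvalue_hermitian_idem_add_ge0 P1_herm P2_herm P1_idem P2_idem).
by rewrite pmulr_lge0 ?invr_gt0 ?ltr0n // -addrA -opprD subr_ge0 addrC.
Qed.

Lemma spec_reflect t : spec t -> t != 0 -> t != 2 * n%:R -> spec (2 * n%:R - t).
Proof. exact: eigenvalue_idem_add_reflect_div. Qed.

Lemma spec_reflect_complement t : spec t -> t != -1 -> t != 2 * n%:R - 1 ->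
  spec (2 * n%:R - 2 - t).
Proof.
move=> /(eigenvalue_complement sum_P12) ev t_neqN1 t_neq.
have := eigenvalue_idem_add_reflect_div P1_idem P2_idem n_neq0 ev.
rewrite subr_eq0 eq_sym => /(_ t_neq).
rewrite -subr_eq0 (_ : 2 * n%:R - 1 - t - 2 * n%:R = - (t + 1)); last by ring.
rewrite oppr_eq0 addr_eq0 => /(_ t_neqN1) /(eigenvalue_complement sum_P34).
by rewrite (_ : 2 * n%:R - 1 - (2 * n%:R - (2 * n%:R - 1 - t)) = 2 * n%:R - 2 - t);
  last by ring.
Qed.

Lemma spec_sub2 t : spec t -> t != 0 -> t != 1 -> spec (t - 2).
Proof.
move=> ev t_neq0 t_neq1; have t_le := spec_le ev.
have t_neq2n : t != 2 * n%:R.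
  by rewrite lt_eqF // (lt_le_trans _ t_le) // ltrDl ltr01.
move: (spec_reflect ev t_neq0 t_neq2n) => /spec_reflect_complement.
rewrite (_ : 2 * n%:R - 2 - (2 * n%:R - t) = t - 2); last by ring.
apply; last by rewrite (inj_eq (addrI _)) (inj_eq oppr_inj).
apply: contraTneq t_le => e; rewrite -[t](subKr (2 * n%:R)) e opprK.
by rewrite -addrA gerDl lt_geF // addr_gt0 ?ltr01.
Qed.

Lemma spec_add2 t : spec t -> t + 3 <= 2 * n%:R -> spec (t + 2).
Proof.
move=> ev t_le; have t_ge0 := spec_ge0 ev.
have t_neqN1 : t != -1 by apply: contraTneq t_ge0 => ->; rewrite lt_geF ?oppr_lt0.
have t_neq : t != 2 * n%:R - 1.
  have e : -1 + 3 = 2 :> C by ring.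
  by apply: contraTneq t_le => ->; rewrite -addrA e gerDl lt_geF.
move: (spec_reflect_complement ev t_neqN1 t_neq) => /spec_reflect.
rewrite (_ : 2 * n%:R - (2 * n%:R - 2 - t) = t + 2); last by ring.
apply.
  apply: contraTneq t_le => e; rewrite -[t](subKr (2 * n%:R - 2)) e subr0.
  by rewrite (_ : _ + 3 = 2 * n%:R + 1); [rewrite gerDl lt_geF ?ltr01 | ring].
apply: contraTneq t_ge0 => e; rewrite -[t](subKr (2 * n%:R - 2)) e.
by rewrite (_ : _ - _ = -2); [rewrite lt_geF ?oppr_lt0 | ring].
Qed.

Lemma spec_nat t : spec t -> exists m : nat, t = m%:R.
Proof.
suff nat_below N s : spec s -> s < N%:R -> exists m : nat, s = m%:R.
  move=> ev; apply: (nat_below (2 * n)%N t ev).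
  by rewrite natrM (lt_le_trans _ (spec_le ev)) // ltrDl ltr01.
elim: N s => [|N IH] s ev s_lt.
  by have := lt_le_trans s_lt (spec_ge0 ev); rewrite ltxx.
have [-> | s_neq0] := eqVneq s 0; first by exists 0%N.
have [-> | s_neq1] := eqVneq s 1; first by exists 1%N.
have [|m sm] := IH _ (spec_sub2 ev s_neq0 s_neq1).
  by rewrite ltrBlDr (lt_le_trans s_lt) // -natrD ler_nat addn2.
by exists m.+2; rewrite -addn2 natrD -sm subrK.
Qed.

Lemma spec_sub_double p k : spec (p + k.*2)%:R -> spec p%:R.
Proof.
elim: k => [|k IH]; first by rewrite addn0.
rewrite doubleS !addnS => ev; apply: IH.
have := spec_sub2 ev; rewrite pnatr_eq0 pnatr_eq1 -addn2 natrD addrK.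
by apply; rewrite addn2.
Qed.

Lemma spec_add_double p j : spec p%:R -> (j.*2 + p + 1 <= 2 * n)%N -> spec (j.*2 + p)%:R.
Proof.
move=> ev; elim: j => [|j IH] j_le //.
rewrite doubleS addSn addSn -addn2 natrD; apply: spec_add2.
  by apply: IH; lia.
by rewrite -natrD -natrM ler_nat; lia.
Qed.

Lemma spec_ladder : exists2 p, (p < 2)%N & forall j : 'I_n, spec (j.*2 + p)%:R.
Proof.
have [a ev] := eigenvalue_closed (P3 + P4) n_gt0.
have [m am] : exists m : nat, a * n%:R = m%:R by apply: spec_nat; rewrite mulfK.
have ev_m : spec m%:R by rewrite -am mulfK.
exists (odd m); first by case: odd.
move=> j; apply: spec_add_double; last by have := ltn_ord j; case: odd; lia.
by apply: (@spec_sub_double _ m./2); rewrite odd_double_half.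
Qed.

End QuadrupleSpectrum.

Lemma pos_sum_leq_card_eq1 n (f : 'I_n -> nat) :
  (forall j, 0 < f j)%N -> (\sum_j f j <= n)%N -> forall j, f j = 1%N.
Proof.
move=> f_gt0 sum_le.
have sumE : (\sum_j f j = \sum_j (f j - 1) + n)%N.
  rewrite -[in X in (_ + X)%N](card_ord n) -sum1_card -big_split /=.
  by apply: eq_bigr => j _; rewrite subnK.
have : (\sum_j (f j - 1) == 0)%N by move: sum_le; rewrite sumE; lia.
by rewrite sum_nat_eq0 => /forallP all0 j; have := all0 j; have := f_gt0 j; move=> /= ? /eqP; lia.
Qed.

(* The [n] eigenspaces form a direct sum inside an [n]-dimensional space, so
   each is a line and any choice of eigenvectors is a basis. *)
Lemma distinct_eigenvalues_diagonalizable (F : fieldType) n (A : 'M[F]_n)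
    (d : 'I_n -> F) :
  injective d -> (forall j, eigenvalue A (d j)) ->
  exists2 V : 'M_n, V \in unitmx & conjmx V A = diag_mx (\row_j d j).
Proof.
move=> d_inj d_eig.
pose E j := eigenspace A (d j).
have E_direct : mxdirect (\sum_(j | predT j) E j).
  by apply: mxdirect_sum_eigenspace => i j _ _; apply: d_inj.
have rank_sumE : \rank (\sum_j E j) = (\sum_j \rank (E j))%N := mxdirectP E_direct.
have rank_E1 : forall j, \rank (E j) = 1%N.
  apply: pos_sum_leq_card_eq1 => [j|]; first by rewrite lt0n mxrank_eq0; exact: d_eig.
  by rewrite -rank_sumE rank_leq_col.
have eigvec j : exists v : 'rV_n, (v <= E j)%MS && (v != 0).
  have /eigenvalueP[v vA v_neq0] := d_eig j.
  by exists v; rewrite v_neq0 andbT; apply/eigenspaceP.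
pose v j := sval (sigW (eigvec j)).
have vP j : (v j <= E j)%MS && (v j != 0) := svalP (sigW (eigvec j)).
pose V := \matrix_j v j.
have E_sub_V j : (E j <= V)%MS.
  have /andP[v_sub v_neq0] := vP j.
  have rank_v : \rank (v j) = 1%N.
    by apply/eqP; rewrite eqn_leq rank_leq_row lt0n mxrank_eq0 v_neq0.
  have := (mxrank_leqif_sup v_sub).2; rewrite rank_v rank_E1 eqxx => /esym E_eq_v.
  by apply: submx_trans E_eq_v _; rewrite -(rowK v j) row_sub.
have V_unit : V \in unitmx.
  rewrite -row_full_unit /row_full eqn_leq rank_leq_col.
  rewrite -[X in (X <= _)%N](card_ord n) -sum1_card.
  under eq_bigr => j _ do rewrite -(rank_E1 j).
  by rewrite -rank_sumE mxrankS //; apply/sumsmx_subP => j _; exact: E_sub_V.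
have VA : V *m A = diag_mx (\row_j d j) *m V.
  apply/row_matrixP => j; rewrite !row_mul rowK row_diag_mx -scalemxAl -rowE rowK mxE.
  by have /andP[/eigenspaceP -> _] := vP j.
by exists V; rewrite // conjumx // VA mulmxK.
Qed.

Section UnitConjugation.
Variables (F : fieldType) (n : nat) (V : 'M[F]_n).
Hypothesis V_unit : V \in unitmx.

Lemma conjumxD A B : conjmx V (A + B) = conjmx V A + conjmx V B.
Proof. by rewrite !conjumx // mulmxDr mulmxDl. Qed.

Lemma conjumxB A B : conjmx V (A - B) = conjmx V A - conjmx V B.
Proof. by rewrite !conjumx // mulmxBr mulmxBl. Qed.

Lemma conjumxZ a A : conjmx V (a *: A) = a *: conjmx V A.
Proof. by rewrite !conjumx // -scalemxAr -scalemxAl. Qed.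

Lemma conjumxM A B : conjmx V (A *m B) = conjmx V A *m conjmx V B.
Proof. by rewrite !conjumx // !mulmxA mulmxKV. Qed.

Lemma conjumx_scalar a : conjmx V a%:M = a%:M.
Proof. by rewrite conjmx_scalar // row_free_unit. Qed.

Lemma mxtrace_conjumx A : \tr (conjmx V A) = \tr A.
Proof. by rewrite conjumx // mxtrace_mulC mulmxA mulVmx // mul1mx. Qed.

Lemma eigenvalue_conjumx A a : eigenvalue (conjmx V A) a -> eigenvalue A a.
Proof. by apply: eigenvalue_conjmx; rewrite ?stablemx_unit ?row_free_unit. Qed.

End UnitConjugation.

Lemma eigenvalue_diag_mx (F : fieldType) n (d : 'rV[F]_n) j :
  eigenvalue (diag_mx d) (d 0 j).
Proof.
apply/eigenvalueP; exists (delta_mx 0 j); first by rewrite -rowE row_diag_mx.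
by apply/eqP => /matrixP/(_ 0 j); rewrite !mxE !eqxx => /eqP; rewrite oner_eq0.
Qed.

Lemma comm_diag_mx_is_diag (F : fieldType) n (B : 'M[F]_n) (d : 'rV[F]_n) :
  injective (d 0) -> B *m diag_mx d = diag_mx d *m B -> is_diag_mx B.
Proof.
move=> d_inj /matrixP Bd; apply/is_diag_mxP => i j ij.
have : (d 0 j - d 0 i) * B i j == 0.
  have := Bd i j; rewrite mul_mx_diag mul_diag_mx !mxE => Bdij.
  by rewrite mulrBl [d 0 j * _]mulrC Bdij subrr.
rewrite mulf_eq0 subr_eq0 => /orP[/eqP /d_inj ji | /eqP //].
by rewrite ji eqxx in ij.
Qed.

Lemma idem_add_diag_entry (F : numFieldType) n (P Q : 'M[F]_n) (d : 'rV[F]_n) j :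
  P *m P = P -> Q *m Q = Q -> P + Q = diag_mx d -> d 0 j != 1 -> P j j = d 0 j / 2.
Proof.
move=> P_idem Q_idem PQd dj_neq1.
have diag_jj : P j j + Q j j = d 0 j.
  by have := congr1 (fun M : 'M[F]_n => M j j) PQd; rewrite /= !mxE eqxx mulr1n.
have anti_jj : (d 0 j - 1) * (P j j - Q j j) = 0.
  have := congr1 (fun M : 'M[F]_n => M j j) (idem_sub_anticomm P_idem Q_idem).
  rewrite /= PQd mul_diag_mx mul_mx_diag !mxE => anti.
  apply: (@mulfI _ 2); first by rewrite pnatr_eq0.
  by rewrite mulr0 -(subrr (2 * (P j j - Q j j))) -{1}anti; ring.
move/eqP: anti_jj; rewrite mulf_eq0 subr_eq0 (negPf dj_neq1) subr_eq0 => /eqP PQjj.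
by rewrite -diag_jj -PQjj; field.
Qed.

Lemma sqr1_mul_gt0_sg (R : numDomainType) (s z : R) :
  s ^+ 2 = 1 -> 0 < s * z -> s = Num.sg z.
Proof.
move=> /eqP; rewrite sqrf_eq1 => /orP[] /eqP -> sz_gt0.
  by rewrite gtr0_sg // -[z]mul1r.
by rewrite ltr0_sg // -oppr_gt0 -mulN1r.
Qed.

Lemma sg_natr_sub_half (R : numFieldType) (a b : nat) :
  Num.sg (b%:R - 2^-1 - a%:R : R) = if (a < b)%N then 1 else -1.
Proof.
have half_lt1 : 2^-1 < 1 :> R by rewrite invf_lt1 ?ltr0n ?ltr1n.
case: ltnP => ab.
  rewrite gtr0_sg // (_ : _ - _ - _ = (b - a)%N%:R - 2^-1); last first.
    by rewrite natrB ?(ltnW ab) //; ring.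
  by rewrite subr_gt0 (lt_le_trans half_lt1) // ler1n subn_gt0.
rewrite ltr0_sg // (_ : _ - _ - _ = - ((a - b)%N%:R + 2^-1)); last first.
  by rewrite natrB //; ring.
by rewrite oppr_lt0 ltr_wpDl ?invr_gt0 ?ltr0n.
Qed.

Lemma mxtrace_mul_diag (R : pzSemiRingType) n (A : 'M[R]_n) (d : 'rV[R]_n) :
  \tr (A *m diag_mx d) = \sum_j A j j * d 0 j.
Proof. by rewrite mul_mx_diag /mxtrace; apply: eq_bigr => j _; rewrite mxE. Qed.

(* Factor [P] through its column and row bases: [P = CB RB] with [RB CB = 1]. *)
Lemma mxtrace_idem (F : fieldType) n (P : 'M[F]_n) : P *m P = P -> \tr P = (\rank P)%:R.
Proof.
move=> P_idem; set CB := col_base P; set RB := row_base P.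
have PE : CB *m RB = P by exact: mulmx_base.
have : (CB *m (RB *m CB)) *m RB = (CB *m 1%:M) *m RB.
  by rewrite mulmx1 (mulmxA CB RB CB) PE -(mulmxA P CB RB) PE P_idem.
move/(row_free_inj (row_base_free P))/(row_full_inj (col_base_full P)) => RCB.
by rewrite -{1}PE mxtrace_mulC RCB mxtrace1.
Qed.

Lemma sum_double_addn (R : comPzRingType) m p :
  \sum_(j < m) ((j.*2 + p)%:R : R) = m%:R * (m%:R + p%:R - 1).
Proof.
elim: m => [|m IH]; first by rewrite big_ord0 mul0r.
by rewrite big_ord_recr /= IH -addnn -[m.+1]addn1 !natrD; ring.
Qed.

Lemma double_addn_div_inj (F : numFieldType) n p : n%:R != 0 :> F ->
  injective (fun j : 'I_n => (j.*2 + p)%:R / n%:R : F).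
Proof.
move=> n_neq0 i j /(mulIf (invr_neq0 n_neq0)) /eqP; rewrite eqr_nat eqn_add2r => /eqP.
by rewrite -!muln2 => /eqP; rewrite eqn_mul2r /= => /eqP /val_inj.
Qed.

Section SignProjectionTraces.
Variables (C : numClosedFieldType) (n r p : nat) (P1 P2 P3 P4 S V : 'M[C]_n).
Hypotheses (P1_idem : P1 *m P1 = P1) (P2_idem : P2 *m P2 = P2).
Hypotheses (P3_idem : P3 *m P3 = P3) (P4_idem : P4 *m P4 = P4).
Hypothesis sum_P : P1 + P2 + P3 + P4 = (2 - n%:R^-1)%:M.
Hypotheses (rank_P3 : \rank P3 = n./2) (rank_P4 : \rank P4 = n./2).
Hypotheses (r_lt : (2 * r < n)%N) (p_lt2 : (p < 2)%N).
Hypothesis V_unit : V \in unitmx.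

Local Notation mu j := ((j.*2 + p)%:R / n%:R : C).

Hypothesis conjV_P34 : conjmx V (P3 + P4) = diag_mx (\row_j mu j).

Local Notation Z := ((2 * r%:R - 2^-1)%:M - n%:R *: (P3 + P4)).
Local Notation Q := (2^-1 *: (1%:M + S)).

Hypothesis S_sgn : is_sgn Z S.

Let n_neq0 : n%:R != 0 :> C. Proof. by rewrite pnatr_eq0; lia. Qed.

Lemma conjV_P12 : conjmx V (P1 + P2) = diag_mx (\row_j (2 - n%:R^-1 - mu j)).
Proof.
have -> : P1 + P2 = (2 - n%:R^-1)%:M - (P3 + P4).
  by apply/esym/eqP; rewrite subr_eq -sum_P !addrA.
rewrite conjumxB // conjumx_scalar // conjV_P34.
by apply/matrixP => i j; rewrite !mxE; case: eqVneq => _; rewrite ?mulr1n ?mulr0n ?subr0.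
Qed.

Let conjV_Z :
  conjmx V Z = diag_mx (\row_j ((r.*2)%:R - 2^-1 - (j.*2 + p)%:R)).
Proof.
rewrite conjumxB // conjumx_scalar // conjumxZ // conjV_P34.
apply/matrixP => i j; rewrite !mxE; case: eqVneq => [->|_]; last first.
  by rewrite !mulr0n mulr0 subr0.
by rewrite !mulr1n mulrCA divff // mulr1 -[r.*2]mul2n natrM.
Qed.

Lemma conjV_sgn_is_diag : is_diag_mx (conjmx V S).
Proof.
case: S_sgn => _ _ SZ_comm _.
have S_comm : S *m (P3 + P4) = (P3 + P4) *m S.
  move: SZ_comm; rewrite mulmxBr mulmxBl mul_mx_scalar mul_scalar_mx.
  rewrite -scalemxAr -scalemxAl => /eqP; rewrite (inj_eq (addrI _)) (inj_eq oppr_inj).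
  by move=> /eqP /(scalerI n_neq0).
apply: (comm_diag_mx_is_diag (d := \row_j mu j)).
  by move=> i j; rewrite !mxE; apply: double_addn_div_inj.
by rewrite -conjV_P34 -!conjumxM // S_comm.
Qed.

Lemma conjV_sgn : conjmx V S = diag_mx (\row_j (if (j < r)%N then 1 else -1)).
Proof.
have [s Sd] := diag_mxP _ conjV_sgn_is_diag.
case: S_sgn => S_herm S_unitary _ SZ_pos.
have s_sqr j : s 0 j ^+ 2 = 1.
  have := congr1 (conjmx V) S_unitary; rewrite S_herm conjumxM // Sd mulmx_diag.
  by rewrite conjumx_scalar // => /matrixP/(_ j j); rewrite !mxE eqxx mulr1n expr2.
have sz_gt0 j : 0 < s 0 j * ((r.*2)%:R - 2^-1 - (j.*2 + p)%:R).
  apply: (posdef_eigenvalue_gt0 SZ_pos); apply: (eigenvalue_conjumx V_unit).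
  rewrite conjumxM // Sd conjV_Z mulmx_diag.
  pose z : 'rV[C]_n := \row_k ((r.*2)%:R - 2^-1 - (k.*2 + p)%:R).
  by have := eigenvalue_diag_mx (\row_k (s 0 k * z 0 k)) j; rewrite !mxE.
rewrite Sd; apply/matrixP => i j; rewrite !mxE; case: eqVneq => [->|_]; last first.
  by rewrite !mulr0n.
rewrite (sqr1_mul_gt0_sg (s_sqr j) (sz_gt0 j)) sg_natr_sub_half.
by have -> : (j.*2 + p < r.*2)%N = (j < r)%N by case: p p_lt2 => [|[]] //; lia.
Qed.

Lemma conjV_Q : conjmx V Q = diag_mx (\row_j (j < r)%N%:R).
Proof.
rewrite conjumxZ // conjumxD // conjumx_scalar // conjV_sgn.
apply/matrixP => i j; rewrite !mxE; case: eqVneq => [->|_]; last first.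
  by rewrite !mulr0n addr0 mulr0.
by case: (j < r)%N; rewrite /= ?mulr1n; field.
Qed.

Lemma ntr_mulQ M :
  ntr (M *m Q) = (\sum_(j < n | (j < r)%N) conjmx V M j j) / n%:R.
Proof.
rewrite /ntr -(mxtrace_conjumx V_unit) conjumxM // conjV_Q mxtrace_mul_diag.
rewrite [in RHS]big_mkcond /=.
by congr (_ / _); apply: eq_bigr => j _; rewrite mxE; case: ifP; rewrite ?mulr1 ?mulr0.
Qed.

Let sum_lt_r (f : nat -> C) (g : 'I_n -> C) :
  (forall j : 'I_n, (j < r)%N -> g j = f j) ->
  \sum_(j < n | (j < r)%N) g j = \sum_(j < r) f j.
Proof.
move=> gf; rewrite (big_ord_widen n f) ?(ltnW (leq_ltn_trans (leq_pmull _ _) r_lt)) //.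
by apply: eq_bigr => j; apply: gf.
Qed.

Let conjV_idem P : P *m P = P -> conjmx V P *m conjmx V P = conjmx V P.
Proof. by move=> P_idem; rewrite -conjumxM // P_idem. Qed.

Let small_index (j : 'I_n) : (j < r)%N -> (j.*2 + p.+1 < n)%N.
Proof. by move=> jr; rewrite -addnn; lia. Qed.

Let conjV_pair_diag Pa Pb (d : 'rV[C]_n) j :
  Pa *m Pa = Pa -> Pb *m Pb = Pb -> conjmx V (Pa + Pb) = diag_mx d -> d 0 j != 1 ->
  conjmx V Pa j j = d 0 j / 2 /\ conjmx V Pb j j = d 0 j / 2.
Proof.
move=> /conjV_idem Pa_idem /conjV_idem Pb_idem; rewrite conjumxD // => PE dj_neq1.
split; first exact: idem_add_diag_entry PE dj_neq1.
by rewrite addrC in PE; exact: idem_add_diag_entry PE dj_neq1.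
Qed.

Lemma conjV_P34_diag (j : 'I_n) : (j < r)%N ->
  conjmx V P3 j j = mu j / 2 /\ conjmx V P4 j j = mu j / 2.
Proof.
move=> /small_index jp_lt; have -> : mu j = (\row_k mu k) 0 j by rewrite mxE.
apply: conjV_pair_diag conjV_P34 _ => //; rewrite mxE.
apply/eqP => /(congr1 ( *%R^~ n%:R)) /eqP.
by rewrite /= mulfVK // mul1r eqr_nat => /eqP; lia.
Qed.

Lemma conjV_P12_diag (j : 'I_n) : (j < r)%N ->
  conjmx V P1 j j = (2 - n%:R^-1 - mu j) / 2 /\ conjmx V P2 j j = (2 - n%:R^-1 - mu j) / 2.
Proof.
move=> /small_index jp_lt.
have -> : 2 - n%:R^-1 - mu j = (\row_k (2 - n%:R^-1 - mu k)) 0 j by rewrite mxE.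
apply: conjV_pair_diag conjV_P12 _ => //; rewrite mxE.
rewrite -subr_eq0 (_ : _ - 1 = (n%:R - (j.*2 + p.+1)%:R) / n%:R); last first.
  by rewrite addnS -addn1 natrD; field.
by rewrite mulf_eq0 invr_eq0 (negPf n_neq0) orbF subr_eq0 eqr_nat; apply/eqP; lia.
Qed.

Lemma offset_parity : p = ~~ odd n :> nat.
Proof.
have := mxtrace_conjumx V_unit (P3 + P4).
rewrite conjV_P34 mxtrace_diag mxtraceD !mxtrace_idem // rank_P3 rank_P4.
under eq_bigr do rewrite mxE.
rewrite -mulr_suml sum_double_addn => trE.
have /eqP : (n + p)%N%:R = (n./2 + n./2).+1%:R :> C.
  by rewrite -addn1 !natrD -trE; field.
rewrite eqr_nat addnn -{1}(odd_double_half n) => /eqP.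
by case: (odd n) => /=; lia.
Qed.

Let signr_offset : (-1) ^+ n = 2 * p%:R - 1 :> C.
Proof. by rewrite -signr_odd offset_parity; case: (odd n) => /=; rewrite ?expr0 ?expr1; ring. Qed.

Let sum_mu : \sum_(j < r) mu j = r%:R * (r%:R + p%:R - 1) / n%:R.
Proof. by rewrite -mulr_suml sum_double_addn. Qed.

Lemma ntr_Q : ntr Q = r%:R / n%:R.
Proof.
rewrite -[Q]mul1mx ntr_mulQ (sum_lt_r (f := fun _ => 1)) => [|j _].
  by rewrite sumr_const card_ord.
by rewrite conjumx_scalar // mxE eqxx.
Qed.

Lemma ntr_P34Q : ntr (P3 *m Q) = r%:R * (2 * r%:R - 1 + (-1) ^+ n) / (4 * n%:R ^+ 2) /\
                 ntr (P4 *m Q) = r%:R * (2 * r%:R - 1 + (-1) ^+ n) / (4 * n%:R ^+ 2).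
Proof.
rewrite !ntr_mulQ (sum_lt_r (f := fun j => mu j / 2)) => [|j /conjV_P34_diag[] //].
rewrite (sum_lt_r (f := fun j => mu j / 2)) => [|j /conjV_P34_diag[] //].
by rewrite -mulr_suml sum_mu signr_offset; split; field.
Qed.

Lemma ntr_P12Q :
  ntr (P1 *m Q) = r%:R * (4 * n%:R - 2 * r%:R - 1 - (-1) ^+ n) / (4 * n%:R ^+ 2) /\
  ntr (P2 *m Q) = r%:R * (4 * n%:R - 2 * r%:R - 1 - (-1) ^+ n) / (4 * n%:R ^+ 2).
Proof.
rewrite !ntr_mulQ (sum_lt_r (f := fun j => (2 - n%:R^-1 - mu j) / 2)) => [|j /conjV_P12_diag[] //].
rewrite (sum_lt_r (f := fun j => (2 - n%:R^-1 - mu j) / 2)) => [|j /conjV_P12_diag[] //].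
rewrite -mulr_suml sumrB sumr_const card_ord sum_mu signr_offset -mulr_natl.
by split; field.
Qed.

Lemma ntr_sign_projection :
  [/\ ntr Q = r%:R / n%:R,
      ntr (P3 *m Q) = r%:R * (2 * r%:R - 1 + (-1) ^+ n) / (4 * n%:R ^+ 2),
      ntr (P4 *m Q) = r%:R * (2 * r%:R - 1 + (-1) ^+ n) / (4 * n%:R ^+ 2),
      ntr (P1 *m Q) = r%:R * (4 * n%:R - 2 * r%:R - 1 - (-1) ^+ n) / (4 * n%:R ^+ 2)
    & ntr (P2 *m Q) = r%:R * (4 * n%:R - 2 * r%:R - 1 - (-1) ^+ n) / (4 * n%:R ^+ 2)].
Proof.
have [tr3 tr4] := ntr_P34Q; have [tr1 tr2] := ntr_P12Q.
exact: And5 ntr_Q tr3 tr4 tr1 tr2.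
Qed.

End SignProjectionTraces.

Theorem mainTheorem12 (C : numClosedFieldType) (n r : nat)
    (P1 P2 P3 P4 : 'M[C]_n)
    (hP1 : real_orth_proj P1) (hP2 : real_orth_proj P2)
    (hP3 : real_orth_proj P3) (hP4 : real_orth_proj P4)
    (hsum : P1 + P2 + P3 + P4 = (2 - n%:R^-1)%:M)
    (hrk1 : (\rank P1)%:Z = (n./2)%:Z - (-1) ^+ n)
    (hrk2 : (\rank P2)%:Z = (n./2)%:Z)
    (hrk3 : (\rank P3)%:Z = (n./2)%:Z)
    (hrk4 : (\rank P4)%:Z = (n./2)%:Z)
    (hirr : forall U : 'M[C]_n,
        (U *m P1^T <= U)%MS -> (U *m P2^T <= U)%MS ->
        (U *m P3^T <= U)%MS -> (U *m P4^T <= U)%MS ->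
        U = 0 \/ row_full U)
    (hr : (2 * r < n)%N)
    (S : 'M[C]_n)
    (hS : is_sgn ((2 * r%:R - 2^-1)%:M - n%:R *: (P3 + P4)) S) :
  let Q := 2^-1 *: (1%:M + S) in
  [/\ ntr Q = r%:R / n%:R,
      ntr (P3 *m Q) = r%:R * (2 * r%:R - 1 + (-1) ^+ n) / (4 * n%:R ^+ 2),
      ntr (P4 *m Q) = r%:R * (2 * r%:R - 1 + (-1) ^+ n) / (4 * n%:R ^+ 2),
      ntr (P1 *m Q) = r%:R * (4 * n%:R - 2 * r%:R - 1 - (-1) ^+ n) / (4 * n%:R ^+ 2)
    & ntr (P2 *m Q) = r%:R * (4 * n%:R - 2 * r%:R - 1 - (-1) ^+ n) / (4 * n%:R ^+ 2)].
Proof.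
have n_gt0 : (0 < n)%N by lia.
have P1_herm := real_orth_proj_hermitian hP1.
have P2_herm := real_orth_proj_hermitian hP2.
have P3_herm := real_orth_proj_hermitian hP3.
have P4_herm := real_orth_proj_hermitian hP4.
case: hP1 hP2 hP3 hP4 => [_ _ P1_idem] [_ _ P2_idem] [_ _ P3_idem] [_ _ P4_idem].
have rank_P3 : \rank P3 = n./2 by case: hrk3.
have rank_P4 : \rank P4 = n./2 by case: hrk4.
have [p p_lt2 spec_p] := spec_ladder P1_herm P2_herm P3_herm P4_herm
  P1_idem P2_idem P3_idem P4_idem n_gt0 hsum.
have n_neq0 : n%:R != 0 :> C by rewrite pnatr_eq0 -lt0n.
have [V V_unit VA] := distinct_eigenvalues_diagonalizable
  (@double_addn_div_inj _ _ p n_neq0) spec_p.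
exact: (ntr_sign_projection P1_idem P2_idem P3_idem P4_idem hsum rank_P3 rank_P4
  hr p_lt2 V_unit VA hS).
Qed.
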